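(* Let $X$ be a real UMD Banach space, $1<p<\infty$, $1/p+1/p'=1$, $\beta_{p,X}$ its $\mathrm{UMD}_p$ constant, and let $\mathfrak D=\{(\mathbf f,\mathbf F,\mathbf g,\mathbf G)\in X\times\mathbb{R}\times X^*\times\mathbb{R}:\|\mathbf f\|_X^p\le\mathbf F,\ \|\mathbf g\|_{X^*}^{p'}\le\mathbf G\}$. Let $\mathcal B:\mathfrak D\to\mathbb{R}$ be any function such that (a) $0\le\mathcal B(\mathbf f,\mathbf F,\mathbf g,\mathbf G)\le4\beta_{p,X}\mathbf F^{1/p}\mathbf G^{1/p'}$ for all points of $\mathfrak D$, and (b) for all $A,A_+,A_-\in\mathfrak D$ with $A=(A_++A_-)/2$, writing $A_\pm=(\mathbf f_\pm,\mathbf F_\pm,\mathbf g_\pm,\mathbf G_\pm)$, $\mathcal B(A)\ge\frac12(\mathcal B(A_+)+\mathcal B(A_-))+|\langle\mathbf f_+-\mathbf f_-,\mathbf g_+-\mathbf g_-\rangle_{X,X^*}|$. Fix $k\ge1$ and a dyadic interval $I_0$. For every $I\in\mathcal D_n(I_0)$, $0\le n\le k$, let $A_I=(\mathbf f_I,\mathbf F_I,\mathbf g_I,\mathbf G_I)\in\mathfrak D$ be given such that $A_I=(A_{I^+}+A_{I^-})/2$ whenever $I\in\mathcal D_n(I_0)$ with $n\le k-1$. For $K,L\in\mathcal D_k(I_0)$ let $$\lambda_{KL}=\Big\langle\frac{\mathbf f_K-\mathbf f_{I_0}}{2^k},\frac{\mathbf g_L-\mathbf g_{I_0}}{2^k}\Big\rangle_{X,X^*}+\Big\langle\frac{\mathbf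 f_L-\mathbf f_{I_0}}{2^k},\frac{\mathbf g_K-\mathbf g_{I_0}}{2^k}\Big\rangle_{X,X^*}.$$ Then $$\sum_{K,L\in\mathcal D_k(I_0)}|\lambda_{KL}|\le c\,2^{k/2}\Big(\mathcal B(A_{I_0})-2^{-k}\sum_{I\in\mathcal D_k(I_0)}\mathcal B(A_I)\Big),$$ where $c>0$ is an absolute constant.
   Context: $\mathcal D$ is a dyadic system of $\mathbb{R}$; for $I\in\mathcal D$, $I^+$ and $I^-$ are its two children, and $\mathcal D_n(I)=\{J\in\mathcal D:J\subset I,|J|=2^{-n}|I|\}$ (so $\mathcal D_0(I_0)=\{I_0\}$). $\beta_{p,X}$ is the least constant with $\|\sum\varepsilon_kd_k\|_{L^p(\mathbb{R};X)}\le\beta_{p,X}\|\sum d_k\|_{L^p(\mathbb{R};X)}$ for all $X$-valued martingale difference sequences and signs $\varepsilon_k=\pm1$. *)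

From Stdlib Require Import Reals Lra Lia.
Open Scope R_scope.

Record BanachSpace := {
  carrier :> Type;
  vzero : carrier;
  vadd : carrier -> carrier -> carrier;
  vopp : carrier -> carrier;
  vscal : R -> carrier -> carrier;
  vnorm : carrier -> R;
  vadd_assoc : forall x y z, vadd x (vadd y z) = vadd (vadd x y) z;
  vadd_comm : forall x y, vadd x y = vadd y x;
  vadd_0 : forall x, vadd vzero x = x;
  vadd_opp : forall x, vadd x (vopp x) = vzero;
  vscal_assoc : forall a b x, vscal a (vscal b x) = vscal (a * b) x;
  vscal_1 : forall x, vscal 1 x = x;
  vscal_addr : forall a x y, vscal a (vadd x y) = vadd (vscal a x) (vscal a y);
  vscal_addl : forall a b x, vscal (a + b) x = vadd (vscal a x) (vscal b x);
  vnorm_nonneg : forall x, 0 <= vnorm x;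
  vnorm_eq0 : forall x, vnorm x = 0 -> x = vzero;
  vnorm_scal : forall a x, vnorm (vscal a x) = Rabs a * vnorm x;
  vnorm_triangle : forall x y, vnorm (vadd x y) <= vnorm x + vnorm y;
  vcomplete : forall u : nat -> carrier,
    (forall eps, 0 < eps -> exists N, forall m n, (N <= m)%nat -> (N <= n)%nat ->
        vnorm (vadd (u m) (vopp (u n))) < eps) ->
    exists l, forall eps, 0 < eps -> exists N, forall n, (N <= n)%nat ->
        vnorm (vadd (u n) (vopp l)) < eps
}.

Arguments vzero {_}. Arguments vadd {_} _ _. Arguments vopp {_} _.
Arguments vscal {_} _ _. Arguments vnorm {_} _.

Definition vsub {X : BanachSpace} (x y : X) : X := vadd x (vopp y).

(* Real power x^a for x >= 0, a > 0 (with 0^a = 0). *)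
Definition rpow (x a : R) : R := if Rle_dec x 0 then 0 else Rpower x a.

Fixpoint rsum (n : nat) (f : nat -> R) : R :=
  match n with O => 0 | S m => rsum m f + f m end.
Fixpoint vsum {X : BanachSpace} (n : nat) (f : nat -> X) : X :=
  match n with O => vzero | S m => vadd (vsum m f) (f m) end.

(* Elements of the dual X^*: bounded linear functionals X -> R. *)
Definition is_dual (X : BanachSpace) (g : X -> R) : Prop :=
  (forall x y, g (vadd x y) = g x + g y) /\
  (forall a x, g (vscal a x) = a * g x) /\
  (exists M, forall x, Rabs (g x) <= M * vnorm x).

Definition dual_norm_is (X : BanachSpace) (g : X -> R) (r : R) : Prop :=
  is_lub (fun t => exists x : X, vnorm x <= 1 /\ t = Rabs (g x)) r.

Definition inD (X : BanachSpace) (p p' : R) (f : X) (F : R) (g : X -> R) (G : R) : Prop :=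
  rpow (vnorm f) p <= F /\ is_dual X g /\
  exists r, dual_norm_is X g r /\ rpow r p' <= G.

(* ---- UMD_p constant (dyadic martingales on [0,1)) ----
   Level-n dyadic intervals of [0,1) are indexed by j < 2^n; the children
   of j are 2j and 2j+1.  A dyadic martingale up to level N is
   f : nat -> nat -> X with f n j = (f (n+1) (2j) + f (n+1) (2j+1))/2. *)
Definition mdiff {X : BanachSpace} (f : nat -> nat -> X) (n j : nat) : X :=
  match n with O => f O j | S m => vsub (f n j) (f m (Nat.div j 2)) end.

(* value of sum_{n<=N} eps_n d_n on the leaf j of level N *)
Definition mtransform {X : BanachSpace} (eps : nat -> R) (f : nat -> nat -> X)
  (N j : nat) : X :=
  vsum (S N) (fun n => vscal (eps n) (mdiff f n (Nat.div j (2 ^ (N - n))))).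

Definition Lp_norm_leaves {X : BanachSpace} (p : R) (N : nat) (h : nat -> X) : R :=
  rpow (rsum (2 ^ N) (fun j => / INR (2 ^ N) * rpow (vnorm (h j)) p)) (1 / p).

Definition umd_bound (X : BanachSpace) (p beta : R) : Prop :=
  forall (N : nat) (f : nat -> nat -> X) (eps : nat -> R),
    (forall n j, (n < N)%nat -> (j < 2 ^ n)%nat ->
       f n j = vscal (1/2) (vadd (f (S n) (2 * j)%nat) (f (S n) (2 * j + 1)%nat))) ->
    (forall n, eps n = 1 \/ eps n = -1) ->
    Lp_norm_leaves p N (mtransform eps f N)
      <= beta * Lp_norm_leaves p N (mtransform (fun _ => 1) f N).

(* beta is the UMD_p constant of X (the least such constant); its existence
   means X is UMD. *)
Definition umd_constant (X : BanachSpace) (p beta : R) : Prop :=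
  umd_bound X p beta /\ forall beta', umd_bound X p beta' -> beta <= beta'.

From Stdlib Require Import Reals Lra Lia FunctionalExtensionality.
Open Scope R_scope.

(* Let t(K,L) = <f_K - f_{I_0}, g_L - g_{I_0}> ([cpair]); the left-hand side is the average over
   leaves K, L of |t(K,L) + t(L,K)|.  Since the A_I form a dyadic martingale, every row and column
   of t averages to zero, and t(K,K) + t(L,L) - t(K,L) - t(L,K) = <f_K - f_L, g_K - g_L>, so
   elementary estimates bound the left-hand side by 4 times the average of |<f_K - f_L, g_K - g_L>|.
   To control the latter, pair each leaf K with K xor r: the midpoints of the pairs lie in the
   convex set D and still average to A_{I_0} along the dyadic tree, so iterating (b) bounds the
   average of |<f_K - f_{K xor r}, g_K - g_{K xor r}>| by B(A_{I_0}) - 2^-k sum_I B(A_I), for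
   every r.  Averaging over r proves the estimate with c = 4, even without the factor 2^(k/2). *)

Lemma testbit_lt_pow2 (a m n : nat) : (a < 2 ^ m)%nat -> (m <= n)%nat -> Nat.testbit a n = false.
Proof.
  intros Ha Hmn. rewrite <- (Nat.mod_small a (2 ^ m)) by exact Ha.
  now apply Nat.mod_pow2_bits_high.
Qed.

Lemma lxor_lt_pow2 (m a b : nat) :
  (a < 2 ^ m)%nat -> (b < 2 ^ m)%nat -> (Nat.lxor a b < 2 ^ m)%nat.
Proof.
  intros Ha Hb.
  enough (E : Nat.lxor a b = (Nat.lxor a b) mod 2 ^ m)
    by (rewrite E; apply Nat.mod_upper_bound, Nat.pow_nonzero; lia).
  apply Nat.bits_inj; intros n. destruct (Nat.lt_ge_cases n m).
  - now rewrite Nat.mod_pow2_bits_low.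
  - rewrite Nat.mod_pow2_bits_high, Nat.lxor_spec by lia.
    now rewrite (testbit_lt_pow2 a m n), (testbit_lt_pow2 b m n).
Qed.

Lemma add_pow2_lxor (m i : nat) : (i < 2 ^ m)%nat -> (2 ^ m + i)%nat = Nat.lxor (2 ^ m) i.
Proof.
  intros Hi. apply Nat.add_nocarry_lxor, Nat.bits_inj; intros n.
  rewrite Nat.land_spec, Nat.bits_0, Nat.pow2_bits_eqb.
  destruct (Nat.eqb_spec m n) as [<-|]; [apply (testbit_lt_pow2 i m m)|]; auto.
Qed.

Lemma lxor_add_pow2_l (m i j : nat) : (i < 2 ^ m)%nat -> (j < 2 ^ m)%nat ->
  Nat.lxor (2 ^ m + i) j = (2 ^ m + Nat.lxor i j)%nat.
Proof.
  intros Hi Hj. rewrite (add_pow2_lxor m i), add_pow2_lxor by (auto using lxor_lt_pow2).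
  apply Nat.lxor_assoc.
Qed.

Lemma lxor_add_pow2_r (m i j : nat) : (i < 2 ^ m)%nat -> (j < 2 ^ m)%nat ->
  Nat.lxor i (2 ^ m + j) = (2 ^ m + Nat.lxor i j)%nat.
Proof.
  intros Hi Hj. rewrite Nat.lxor_comm, lxor_add_pow2_l by auto. now rewrite Nat.lxor_comm.
Qed.

Lemma lxor_add_pow2_lr (m i j : nat) : (i < 2 ^ m)%nat -> (j < 2 ^ m)%nat ->
  Nat.lxor (2 ^ m + i) (2 ^ m + j) = Nat.lxor i j.
Proof.
  intros Hi Hj. rewrite (add_pow2_lxor m i Hi), (add_pow2_lxor m j Hj).
  rewrite (Nat.lxor_comm (2 ^ m) i), Nat.lxor_assoc, <- (Nat.lxor_assoc (2 ^ m)).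
  now rewrite Nat.lxor_nilpotent, Nat.lxor_0_l.
Qed.

Fixpoint dyadic_fold {T : Type} (mid : T -> T -> T) (m : nat) (P : nat -> T) : T :=
  match m with
  | O => P O
  | S m' => mid (dyadic_fold mid m' P) (dyadic_fold mid m' (fun i => P (2 ^ m' + i)%nat))
  end.

Section DyadicFold.
Context {T : Type} (mid : T -> T -> T).

Lemma dyadic_fold_ext m (P Q : nat -> T) :
  (forall i, (i < 2 ^ m)%nat -> P i = Q i) -> dyadic_fold mid m P = dyadic_fold mid m Q.
Proof.
  revert P Q; induction m as [|m IH]; intros P Q H; simpl in *.
  - apply H; lia.
  - f_equal; apply IH; intros i Hi; apply H; lia.
Qed.

Lemma dyadic_fold_ind (Dom : T -> Prop) m (P : nat -> T) :
  (forall a b, Dom a -> Dom b -> Dom (mid a b)) ->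
  (forall i, (i < 2 ^ m)%nat -> Dom (P i)) -> Dom (dyadic_fold mid m P).
Proof.
  intros Hmid. revert P; induction m as [|m IH]; intros P H; simpl in *.
  - apply H; lia.
  - apply Hmid; apply IH; intros i Hi; apply H; lia.
Qed.

Hypothesis mid_medial : forall a b c d, mid (mid a b) (mid c d) = mid (mid a c) (mid b d).

Lemma dyadic_fold_mid m (P Q : nat -> T) :
  dyadic_fold mid m (fun i => mid (P i) (Q i)) = mid (dyadic_fold mid m P) (dyadic_fold mid m Q).
Proof.
  revert P Q; induction m as [|m IH]; intros P Q; simpl; auto.
  rewrite !IH. apply mid_medial.
Qed.

Lemma dyadic_fold_const (mid_idem : forall a, mid a a = a) m c :
  dyadic_fold mid m (fun _ => c) = c.
Proof. induction m as [|m IH]; simpl; [|rewrite IH]; auto. Qed.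

Hypothesis mid_comm : forall a b, mid a b = mid b a.

(* Translation by [r] in the dyadic group [(Z/2)^m] is an automorphism of the dyadic tree. *)
Lemma dyadic_fold_lxor m (P : nat -> T) r :
  (r < 2 ^ m)%nat -> dyadic_fold mid m (fun i => P (Nat.lxor i r)) = dyadic_fold mid m P.
Proof.
  revert P r; induction m as [|m IH]; intros P r Hr; simpl in *.
  - now replace r with 0%nat by lia.
  - destruct (Nat.lt_ge_cases r (2 ^ m)) as [Hlt|Hge].
    + f_equal; [now apply IH|].
      rewrite (dyadic_fold_ext m _ (fun i => P (2 ^ m + Nat.lxor i r)%nat))
        by (intros; now rewrite lxor_add_pow2_l).
      now apply (IH (fun j => P (2 ^ m + j)%nat)).
    + set (r' := (r - 2 ^ m)%nat).
      assert (Hr' : (r' < 2 ^ m)%nat) by (unfold r'; lia).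
      replace r with (2 ^ m + r')%nat by (unfold r'; lia).
      rewrite mid_comm; f_equal.
      * rewrite (dyadic_fold_ext m _ (fun i => P (Nat.lxor i r')))
          by (intros; now rewrite lxor_add_pow2_lr).
        now apply IH.
      * rewrite (dyadic_fold_ext m _ (fun i => P (2 ^ m + Nat.lxor i r')%nat))
          by (intros; now rewrite lxor_add_pow2_r).
        now apply (IH (fun j => P (2 ^ m + j)%nat)).
Qed.

End DyadicFold.

Definition Rmid (a b : R) : R := (a + b) / 2.

Lemma Rmid_comm a b : Rmid a b = Rmid b a.
Proof. unfold Rmid; lra. Qed.

Lemma Rmid_medial a b c d : Rmid (Rmid a b) (Rmid c d) = Rmid (Rmid a c) (Rmid b d).
Proof. unfold Rmid; lra. Qed.

Definition avg (m : nat) (h : nat -> R) : R := dyadic_fold Rmid m h.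

Lemma avg_S m h : avg (S m) h = (avg m h + avg m (fun i => h (2 ^ m + i)%nat)) / 2.
Proof. reflexivity. Qed.

Lemma avg_ext m P Q : (forall i, (i < 2 ^ m)%nat -> P i = Q i) -> avg m P = avg m Q.
Proof. apply dyadic_fold_ext. Qed.

Lemma avg_lxor m P r : (r < 2 ^ m)%nat -> avg m (fun i => P (Nat.lxor i r)) = avg m P.
Proof. apply dyadic_fold_lxor, Rmid_comm. Qed.

Lemma avg_const m c : avg m (fun _ => c) = c.
Proof. apply dyadic_fold_const; intros; unfold Rmid; lra. Qed.

Lemma avg_lin m a b P Q : avg m (fun i => a * P i + b * Q i) = a * avg m P + b * avg m Q.
Proof.
  revert P Q; induction m as [|m IH]; intros P Q; [reflexivity|].
  rewrite !avg_S, !IH. lra.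
Qed.

Lemma avg_add m P Q : avg m (fun i => P i + Q i) = avg m P + avg m Q.
Proof.
  rewrite <- (Rmult_1_l (avg m P)), <- (Rmult_1_l (avg m Q)), <- avg_lin.
  apply avg_ext; intros; ring.
Qed.

Lemma avg_sub m P Q : avg m (fun i => P i - Q i) = avg m P - avg m Q.
Proof.
  replace (avg m P - avg m Q) with (1 * avg m P + (-1) * avg m Q) by ring.
  rewrite <- avg_lin. apply avg_ext; intros; ring.
Qed.

Lemma avg_scal m a P : avg m (fun i => a * P i) = a * avg m P.
Proof.
  replace (a * avg m P) with (a * avg m P + 0 * avg m P) by ring.
  rewrite <- avg_lin. apply avg_ext; intros; ring.
Qed.

Lemma avg_le m P Q : (forall i, (i < 2 ^ m)%nat -> P i <= Q i) -> avg m P <= avg m Q.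
Proof.
  revert P Q; induction m as [|m IH]; intros P Q H.
  - apply H; simpl; lia.
  - rewrite !avg_S. simpl in H.
    assert (avg m P <= avg m Q) by (apply IH; intros; apply H; lia).
    assert (avg m (fun i => P (2 ^ m + i)%nat) <= avg m (fun i => Q (2 ^ m + i)%nat))
      by (apply IH; intros; apply H; lia).
    lra.
Qed.

Lemma Rabs_avg_le m P : Rabs (avg m P) <= avg m (fun i => Rabs (P i)).
Proof.
  apply Rabs_le; split.
  - enough (avg m (fun i => -1 * Rabs (P i)) <= avg m P) by (rewrite avg_scal in *; lra).
    apply avg_le; intros. pose proof (Rle_abs (- P i)). rewrite Rabs_Ropp in *. lra.
  - apply avg_le; intros; apply Rle_abs.
Qed.

Lemma avg_swap m n (H : nat -> nat -> R) :
  avg m (fun K => avg n (fun r => H K r)) = avg n (fun r => avg m (fun K => H K r)).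
Proof.
  revert H; induction m as [|m IH]; intros H; unfold avg in *; simpl; auto.
  rewrite !IH. symmetry. apply (dyadic_fold_mid Rmid Rmid_medial).
Qed.

Lemma rsum_add a b h : rsum (a + b) h = rsum a h + rsum b (fun i => h (a + i)%nat).
Proof.
  induction b as [|b IH]; simpl.
  - rewrite Nat.add_0_r; lra.
  - rewrite Nat.add_succ_r; simpl. rewrite IH; lra.
Qed.

Lemma rsum_avg m h : rsum (2 ^ m) h = 2 ^ m * avg m h.
Proof.
  revert h; induction m as [|m IH]; intros h.
  - simpl; unfold avg; simpl; lra.
  - rewrite Nat.pow_succ_r', Nat.mul_comm, Nat.mul_succ_r, Nat.mul_1_r, rsum_add, !IH, avg_S.
    simpl; lra.
Qed.

Lemma rsum_ge0 n h : (forall i, (i < n)%nat -> 0 <= h i) -> 0 <= rsum n h.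
Proof.
  induction n as [|n IH]; intros H; simpl; [lra|].
  pose proof (H n ltac:(lia)). pose proof (IH ltac:(intros; apply H; lia)). lra.
Qed.

Section MidpointConcave.
Context {T : Type} (mid : T -> T -> T) (Dom : T -> Prop).
Variables (Phi : T -> R) (omega : T -> T -> R).
Hypotheses
  (mid_medial : forall a b c d, mid (mid a b) (mid c d) = mid (mid a c) (mid b d))
  (mid_comm : forall a b, mid a b = mid b a)
  (mid_idem : forall a, mid a a = a)
  (Dom_mid : forall a b, Dom a -> Dom b -> Dom (mid a b))
  (omega_ge0 : forall a b, 0 <= omega a b)
  (Phi_mid : forall a b, Dom a -> Dom b -> (Phi a + Phi b) / 2 + omega a b <= Phi (mid a b)).

Lemma avg_le_dyadic_fold m (P : nat -> T) :
  (forall i, (i < 2 ^ m)%nat -> Dom (P i)) ->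
  avg m (fun i => Phi (P i)) <= Phi (dyadic_fold mid m P).
Proof.
  revert P; induction m as [|m IH]; intros P HP; [apply Rle_refl|].
  simpl in HP. rewrite avg_S; simpl.
  assert (H1 : forall i, (i < 2 ^ m)%nat -> Dom (P i)) by (intros; apply HP; lia).
  assert (H2 : forall i, (i < 2 ^ m)%nat -> Dom (P (2 ^ m + i)%nat)) by (intros; apply HP; lia).
  pose proof (IH _ H1). pose proof (IH _ H2).
  pose proof (Phi_mid _ _ (dyadic_fold_ind mid Dom m P Dom_mid H1)
                          (dyadic_fold_ind mid Dom m _ Dom_mid H2)).
  pose proof (omega_ge0 (dyadic_fold mid m P) (dyadic_fold mid m (fun i => P (2 ^ m + i)%nat))).
  lra.
Qed.

Variables (m : nat) (P : nat -> T).
Hypothesis P_Dom : forall i, (i < 2 ^ m)%nat -> Dom (P i).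

Definition concavity_defect : R := Phi (dyadic_fold mid m P) - avg m (fun i => Phi (P i)).

(* Pairing every leaf with its translate by [r] gives new leaves with the same dyadic average. *)
Lemma avg_omega_lxor_le r : (r < 2 ^ m)%nat ->
  avg m (fun K => omega (P K) (P (Nat.lxor K r))) <= concavity_defect.
Proof.
  intros Hr. unfold concavity_defect.
  assert (Hfold : dyadic_fold mid m (fun K => mid (P K) (P (Nat.lxor K r)))
                  = dyadic_fold mid m P).
  { rewrite dyadic_fold_mid, (dyadic_fold_lxor mid mid_comm m P r Hr) by exact mid_medial.
    apply mid_idem. }
  assert (HP' : forall K, (K < 2 ^ m)%nat -> Dom (P (Nat.lxor K r)))
    by (intros; apply P_Dom, lxor_lt_pow2; auto).
  pose proof (avg_le_dyadic_fold m (fun K => mid (P K) (P (Nat.lxor K r)))) as J.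
  rewrite Hfold in J.
  assert (avg m (fun K => (Phi (P K) + Phi (P (Nat.lxor K r))) / 2 + omega (P K) (P (Nat.lxor K r)))
          <= avg m (fun K => Phi (mid (P K) (P (Nat.lxor K r))))) as Hpt
    by (apply avg_le; intros; apply Phi_mid; auto).
  rewrite avg_add in Hpt.
  replace (avg m (fun K => (Phi (P K) + Phi (P (Nat.lxor K r))) / 2))
    with (avg m (fun K => Phi (P K))) in Hpt.
  - assert (avg m (fun K => Phi (mid (P K) (P (Nat.lxor K r)))) <= Phi (dyadic_fold mid m P))
      by (apply J; intros; apply Dom_mid; auto).
    lra.
  - symmetry. rewrite (avg_ext m _ (fun K => / 2 * Phi (P K) + / 2 * Phi (P (Nat.lxor K r))))
      by (intros; lra).
    rewrite avg_lin, (avg_lxor m (fun K => Phi (P K)) r Hr). lra.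
Qed.

Lemma avg2_omega_le : avg m (fun K => avg m (fun L => omega (P K) (P L))) <= concavity_defect.
Proof.
  rewrite (avg_ext m _ (fun K => avg m (fun r => omega (P K) (P (Nat.lxor K r))))).
  - rewrite avg_swap, <- (avg_const m concavity_defect).
    apply avg_le; intros; apply avg_omega_lxor_le; auto.
  - intros K HK. rewrite <- (avg_lxor m (fun L => omega (P K) (P L)) K HK).
    apply avg_ext; intros; now rewrite Nat.lxor_comm.
Qed.

End MidpointConcave.

(* With [w K L = t K K + t L L - t K L - t L K], the zero means give
   [avg_L w K L = t K K + avg_K t K K]; hence [2 |avg_K t K K|] and
   [avg_K |t K K| - |avg_K t K K|] are both at most [avg avg |w|]. *)
Lemma avg2_sym_le m (t : nat -> nat -> R) :
  (forall K, (K < 2 ^ m)%nat -> avg m (fun L => t K L) = 0) ->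
  (forall L, (L < 2 ^ m)%nat -> avg m (fun K => t K L) = 0) ->
  avg m (fun K => avg m (fun L => Rabs (t K L + t L K)))
    <= 4 * avg m (fun K => avg m (fun L => Rabs (t K K + t L L - t K L - t L K))).
Proof.
  intros Hrow Hcol.
  set (w := fun K L => t K K + t L L - t K L - t L K).
  set (W := avg m (fun K => avg m (fun L => Rabs (w K L)))).
  set (T := avg m (fun K => t K K)).
  change (avg m (fun K => avg m (fun L => Rabs (t K L + t L K))) <= 4 * W).
  assert (Hw : forall K, (K < 2 ^ m)%nat -> avg m (fun L => w K L) = t K K + T).
  { intros K HK. unfold w. rewrite !avg_sub, avg_add, avg_const, Hrow, Hcol by auto.
    unfold T; ring. }
  assert (HT : 2 * Rabs T <= W).
  { replace (2 * Rabs T) with (Rabs (avg m (fun K => avg m (fun L => w K L)))).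
    - eapply Rle_trans; [apply Rabs_avg_le|].
      apply avg_le; intros; apply Rabs_avg_le.
    - rewrite (avg_ext m _ (fun K => t K K + T)), avg_add, avg_const by auto.
      fold T. replace (T + T) with (2 * T) by ring.
      rewrite Rabs_mult, Rabs_pos_eq; lra. }
  assert (Hdiag : avg m (fun K => Rabs (t K K)) <= W + Rabs T).
  { enough (avg m (fun K => Rabs (t K K))
            <= avg m (fun K => avg m (fun L => Rabs (w K L)) + Rabs T))
      as Hpt by (rewrite avg_add, avg_const in Hpt; exact Hpt).
    apply avg_le; intros K HK.
    replace (t K K) with (avg m (fun L => w K L) - T) by (rewrite Hw; auto; ring).
    pose proof (Rabs_avg_le m (fun L => w K L)). unfold Rminus.
    pose proof (Rabs_triang (avg m (fun L => w K L)) (- T)). rewrite Rabs_Ropp in *. lra. }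
  assert (Hsplit : avg m (fun K => avg m (fun L => Rabs (t K L + t L K)))
                   <= avg m (fun K => avg m (fun L => Rabs (t K K) + Rabs (t L L) + Rabs (w K L)))).
  { apply avg_le; intros K HK; apply avg_le; intros L HL.
    replace (t K L + t L K) with (t K K + t L L - w K L) by (unfold w; ring).
    unfold Rminus. eapply Rle_trans; [apply Rabs_triang|].
    rewrite Rabs_Ropp. pose proof (Rabs_triang (t K K) (t L L)). lra. }
  rewrite (avg_ext m (fun K => avg m (fun L => _ + _ + _))
            (fun K => Rabs (t K K) + avg m (fun L => Rabs (t L L)) + avg m (fun L => Rabs (w K L))))
    in Hsplit by (intros; rewrite !avg_add, avg_const; ring).
  rewrite !avg_add, avg_const in Hsplit. fold W in Hsplit. lra.
Qed.

Lemma exp_le_compat x y : x <= y -> exp x <= exp y.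
Proof.
  intros H. destruct (Rle_lt_or_eq_dec _ _ H) as [Hlt | ->]; [left; now apply exp_increasing | lra].
Qed.

(* [s |-> exp (q s) - q exp s] has derivative [q (exp (q s) - exp s)], of the sign of [s]. *)
Lemma bernoulli_exp q s : 1 <= q -> 1 + q * (exp s - 1) <= exp (q * s).
Proof.
  intros Hq.
  set (h := (comp exp (mult_real_fct q id) - mult_real_fct q exp)%F).
  set (h' := fun c => exp (q * c) * (q * 1) - q * exp c).
  assert (Hh' : forall c, derivable_pt_lim h c (h' c)).
  { intros c. apply derivable_pt_lim_minus.
    - apply derivable_pt_lim_comp; [apply derivable_pt_lim_scal, derivable_pt_lim_id|].
      apply derivable_pt_lim_exp.
    - apply derivable_pt_lim_scal, derivable_pt_lim_exp. }
  assert (Hh : forall x, h x = exp (q * x) - q * exp x) by reflexivity.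
  enough (1 - q <= h s) by (rewrite Hh in *; lra).
  replace (1 - q) with (h 0) by (rewrite Hh, Rmult_0_r, exp_0; ring).
  destruct (Rtotal_order s 0) as [Hs|[->|Hs]].
  - destruct (MVT_cor2 h h' s 0 Hs (fun c _ => Hh' c)) as [c [Hc1 Hc2]].
    assert (exp (q * c) <= exp c) by (apply exp_le_compat; nra).
    assert (h' c <= 0) by (unfold h'; nra). nra.
  - lra.
  - destruct (MVT_cor2 h h' 0 s Hs (fun c _ => Hh' c)) as [c [Hc1 Hc2]].
    assert (exp c <= exp (q * c)) by (apply exp_le_compat; nra).
    assert (0 <= h' c) by (unfold h'; nra). nra.
Qed.

Lemma rpow_ge0 x q : 0 <= rpow x q.
Proof. unfold rpow; destruct Rle_dec; [lra | left; apply exp_pos]. Qed.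

Lemma rpow_Rpower x q : 0 < x -> rpow x q = Rpower x q.
Proof. intros; unfold rpow; destruct Rle_dec; [lra | auto]. Qed.

Lemma rpow_le_compat q x y : 0 < q -> 0 <= x <= y -> rpow x q <= rpow y q.
Proof.
  intros Hq Hxy. destruct (Rle_dec x 0) as [Hx|Hx].
  - unfold rpow at 1. destruct Rle_dec; [apply rpow_ge0 | lra].
  - rewrite !rpow_Rpower by lra. apply Rle_Rpower_l; lra.
Qed.

Lemma rpow_tangent_le q m x : 1 <= q -> 0 < m -> 0 <= x ->
  rpow m q * (1 + q * (x / m - 1)) <= rpow x q.
Proof.
  intros Hq Hm Hx. rewrite (rpow_Rpower m) by lra.
  assert (Hpm : 0 < Rpower m q) by apply exp_pos.
  destruct (Rle_lt_or_eq_dec _ _ Hx) as [Hx' | <-].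
  - rewrite rpow_Rpower by lra.
    replace x with (m * (x / m)) at 2 by (field; lra).
    rewrite <- Rpower_mult_distr by (try apply Rdiv_lt_0_compat; lra).
    apply Rmult_le_compat_l; [lra|].
    pose proof (bernoulli_exp q (ln (x / m)) Hq) as Hb.
    rewrite exp_ln in Hb by (apply Rdiv_lt_0_compat; lra).
    exact Hb.
  - unfold rpow at 1. destruct Rle_dec; [|lra].
    replace (0 / m) with 0 by (field; lra). nra.
Qed.

Lemma rpow_mid_le q a b : 1 <= q -> 0 <= a -> 0 <= b ->
  rpow ((a + b) / 2) q <= (rpow a q + rpow b q) / 2.
Proof.
  intros Hq Ha Hb. destruct (Rle_dec ((a + b) / 2) 0) as [H0|H0].
  - unfold rpow at 1. destruct Rle_dec; [|lra].
    pose proof (rpow_ge0 a q); pose proof (rpow_ge0 b q); lra.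
  - set (m := (a + b) / 2) in *.
    pose proof (rpow_tangent_le q m a Hq ltac:(lra) Ha).
    pose proof (rpow_tangent_le q m b Hq ltac:(lra) Hb).
    assert (E : (a / m - 1) + (b / m - 1) = 0) by (unfold m in *; field; lra).
    replace (b / m - 1) with (- (a / m - 1)) in * by lra.
    nra.
Qed.

Lemma Rabs_mid_le u v : Rabs ((u + v) / 2) <= (Rabs u + Rabs v) / 2.
Proof. unfold Rabs; repeat destruct Rcase_abs; lra. Qed.

Section Banach.
Variable X : BanachSpace.

Lemma vnorm_mid_le (a b : X) : vnorm (vscal (1/2) (vadd a b)) <= (vnorm a + vnorm b) / 2.
Proof.
  rewrite vnorm_scal, Rabs_pos_eq by lra. pose proof (vnorm_triangle X a b). lra.
Qed.

Lemma additive_sub (g : X -> R) : (forall x y, g (vadd x y) = g x + g y) ->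
  forall x y, g (vsub x y) = g x - g y.
Proof.
  intros Hadd x y.
  assert (H0 : g vzero = 0) by (pose proof (Hadd vzero vzero) as H; rewrite vadd_0 in H; lra).
  pose proof (Hadd y (vopp y)) as H. rewrite vadd_opp, H0 in H.
  unfold vsub. rewrite Hadd. lra.
Qed.

Lemma is_dual_mid (g1 g2 : X -> R) : is_dual X g1 -> is_dual X g2 ->
  is_dual X (fun x => (g1 x + g2 x) / 2).
Proof.
  intros [Ha1 [Hs1 [M1 HM1]]] [Ha2 [Hs2 [M2 HM2]]]. split; [|split].
  - intros x y. rewrite Ha1, Ha2. lra.
  - intros a x. rewrite Hs1, Hs2. lra.
  - exists ((M1 + M2) / 2). intros x. eapply Rle_trans; [apply Rabs_mid_le|].
    pose proof (HM1 x); pose proof (HM2 x). lra.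
Qed.

Lemma dual_norm_ge0 (g : X -> R) r : dual_norm_is X g r -> 0 <= r.
Proof.
  intros [Hub _]. apply Rle_trans with (Rabs (g (vscal 0 vzero))); [apply Rabs_pos|].
  apply Hub. exists (vscal 0 vzero). split; auto. rewrite vnorm_scal, Rabs_R0. lra.
Qed.

Lemma dual_norm_mid (g1 g2 : X -> R) r1 r2 :
  dual_norm_is X g1 r1 -> dual_norm_is X g2 r2 ->
  exists r, dual_norm_is X (fun x => (g1 x + g2 x) / 2) r /\ r <= (r1 + r2) / 2.
Proof.
  intros Hr1 Hr2.
  set (S := fun t => exists x : X, vnorm x <= 1 /\ t = Rabs ((g1 x + g2 x) / 2)).
  assert (Hub : forall t, S t -> t <= (r1 + r2) / 2).
  { intros t [x [Hx ->]]. eapply Rle_trans; [apply Rabs_mid_le|].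
    assert (Rabs (g1 x) <= r1) by (apply Hr1; exists x; auto).
    assert (Rabs (g2 x) <= r2) by (apply Hr2; exists x; auto). lra. }
  destruct (completeness S) as [r Hr].
  - exists ((r1 + r2) / 2). exact Hub.
  - exists (Rabs ((g1 (vscal 0 vzero) + g2 (vscal 0 vzero)) / 2)), (vscal 0 vzero).
    rewrite vnorm_scal, Rabs_R0. split; [lra | reflexivity].
  - exists r. split; [exact Hr | now apply Hr].
Qed.

Lemma inD_mid p p' f1 F1 g1 G1 f2 F2 g2 G2 : 1 <= p -> 1 <= p' ->
  inD X p p' f1 F1 g1 G1 -> inD X p p' f2 F2 g2 G2 ->
  inD X p p' (vscal (1/2) (vadd f1 f2)) ((F1 + F2) / 2)
             (fun x => (g1 x + g2 x) / 2) ((G1 + G2) / 2).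
Proof.
  intros Hp Hp' [Hf1 [Hg1 [r1 [Hr1 HG1]]]] [Hf2 [Hg2 [r2 [Hr2 HG2]]]].
  split; [|split; [now apply is_dual_mid|]].
  - eapply Rle_trans.
    { apply rpow_le_compat; [lra | split; [apply vnorm_nonneg | apply vnorm_mid_le]]. }
    eapply Rle_trans; [apply rpow_mid_le; auto using vnorm_nonneg | lra].
  - destruct (dual_norm_mid g1 g2 r1 r2 Hr1 Hr2) as [r [Hr Hrle]].
    exists r. split; [exact Hr|].
    pose proof (dual_norm_ge0 _ _ Hr1). pose proof (dual_norm_ge0 _ _ Hr2).
    eapply Rle_trans.
    { apply rpow_le_compat; [lra | split; [eapply dual_norm_ge0; eauto | exact Hrle]]. }
    eapply Rle_trans; [apply rpow_mid_le; auto | lra].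
Qed.

End Banach.

Lemma conjugate_exponent_ge1 p p' : 1 < p -> 1 / p + 1 / p' = 1 -> 1 <= p'.
Proof.
  intros Hp Hpp'.
  assert (H1p : 0 < 1 / p < 1).
  { split; [apply Rdiv_lt_0_compat | apply (Rmult_lt_reg_r p); field_simplify]; lra. }
  destruct (Rlt_le_dec 0 p') as [Hpos|Hneg].
  - assert (p' * (1 / p') = 1) by (field; lra). nra.
  - destruct (Rle_lt_or_eq_dec _ _ Hneg) as [Hlt | ->].
    + assert (1 / p' < 0) by (apply Rdiv_pos_neg; lra). lra.
    + unfold Rdiv at 2 in Hpp'. rewrite Rinv_0 in Hpp'. lra.
Qed.

Record point (X : BanachSpace) := mkpoint { pt_f : X; pt_F : R; pt_g : X -> R; pt_G : R }.
Arguments mkpoint {X}. Arguments pt_f {X}. Arguments pt_F {X}.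
Arguments pt_g {X}. Arguments pt_G {X}.

Definition pmid {X : BanachSpace} (a b : point X) : point X :=
  mkpoint (vscal (1/2) (vadd (pt_f a) (pt_f b))) ((pt_F a + pt_F b) / 2)
          (fun x => (pt_g a x + pt_g b x) / 2) ((pt_G a + pt_G b) / 2).

Section PointMidpoint.
Variable X : BanachSpace.
Implicit Types a b c d : point X.

Lemma pmid_comm a b : pmid a b = pmid b a.
Proof.
  unfold pmid. f_equal; try (apply functional_extensionality; intros); try lra.
  now rewrite vadd_comm.
Qed.

Lemma pmid_idem a : pmid a a = a.
Proof.
  destruct a as [f F g G]; unfold pmid; simpl.
  f_equal; try (apply functional_extensionality; intros); try lra.
  rewrite <- (vscal_1 X f) at 1 2. rewrite <- vscal_addl, vscal_assoc.
  replace (1 / 2 * (1 + 1)) with 1 by field. apply vscal_1.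
Qed.

Lemma pmid_medial a b c d : pmid (pmid a b) (pmid c d) = pmid (pmid a c) (pmid b d).
Proof.
  unfold pmid; simpl. f_equal; try (apply functional_extensionality; intros); try lra.
  rewrite !vscal_addr, <- !vadd_assoc. f_equal.
  rewrite !vadd_assoc. f_equal. apply vadd_comm.
Qed.

Lemma pt_g_dyadic_fold m (P : nat -> point X) x :
  pt_g (dyadic_fold pmid m P) x = avg m (fun i => pt_g (P i) x).
Proof.
  revert P; induction m as [|m IH]; intros P; [reflexivity|].
  rewrite avg_S, <- !IH. reflexivity.
Qed.

Lemma linear_pt_f_dyadic_fold (h : X -> R) m (P : nat -> point X) :
  (forall x y, h (vadd x y) = h x + h y) -> (forall s x, h (vscal s x) = s * h x) ->
  h (pt_f (dyadic_fold pmid m P)) = avg m (fun i => h (pt_f (P i))).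
Proof.
  intros Hadd Hscal. revert P; induction m as [|m IH]; intros P; [reflexivity|].
  rewrite avg_S, <- !IH. simpl. rewrite Hscal, Hadd. lra.
Qed.

End PointMidpoint.

Section BellmanTree.
Variables (X : BanachSpace) (p p' : R).
Hypotheses (Hp : 1 <= p) (Hp' : 1 <= p').
Variable B : X -> R -> (X -> R) -> R -> R.
Hypothesis B_mid :
  forall f F g G fp Fp gp Gp fm Fm gm Gm,
    inD X p p' f F g G -> inD X p p' fp Fp gp Gp -> inD X p p' fm Fm gm Gm ->
    f = vscal (1/2) (vadd fp fm) -> F = (Fp + Fm) / 2 ->
    g = (fun x => (gp x + gm x) / 2) -> G = (Gp + Gm) / 2 ->
    B f F g G >= (B fp Fp gp Gp + B fm Fm gm Gm) / 2
                 + Rabs ((fun x => gp x - gm x) (vsub fp fm)).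

Definition inD_point (a : point X) : Prop := inD X p p' (pt_f a) (pt_F a) (pt_g a) (pt_G a).
Definition B_point (a : point X) : R := B (pt_f a) (pt_F a) (pt_g a) (pt_G a).
Definition pairing_gap (a b : point X) : R :=
  Rabs (pt_g a (vsub (pt_f a) (pt_f b)) - pt_g b (vsub (pt_f a) (pt_f b))).

Lemma inD_point_pmid a b : inD_point a -> inD_point b -> inD_point (pmid a b).
Proof. apply inD_mid; auto. Qed.

Lemma B_point_pmid a b : inD_point a -> inD_point b ->
  (B_point a + B_point b) / 2 + pairing_gap a b <= B_point (pmid a b).
Proof.
  intros Ha Hb. pose proof (B_mid _ _ _ _ _ _ _ _ _ _ _ _ (inD_point_pmid a b Ha Hb) Ha Hb
                             eq_refl eq_refl eq_refl eq_refl).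
  unfold B_point, pairing_gap. lra.
Qed.

Variables (k : nat) (f : nat -> nat -> X) (F : nat -> nat -> R)
          (g : nat -> nat -> X -> R) (G : nat -> nat -> R).
Hypothesis tree_inD :
  forall n j, (n <= k)%nat -> (j < 2 ^ n)%nat -> inD X p p' (f n j) (F n j) (g n j) (G n j).
Hypothesis tree_mid :
  forall n j, (n < k)%nat -> (j < 2 ^ n)%nat ->
    f n j = vscal (1/2) (vadd (f (S n) (2 * j)%nat) (f (S n) (2 * j + 1)%nat)) /\
    F n j = (F (S n) (2 * j)%nat + F (S n) (2 * j + 1)%nat) / 2 /\
    g n j = (fun x => (g (S n) (2 * j)%nat x + g (S n) (2 * j + 1)%nat x) / 2) /\
    G n j = (G (S n) (2 * j)%nat + G (S n) (2 * j + 1)%nat) / 2.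

Definition tree_point (n j : nat) : point X := mkpoint (f n j) (F n j) (g n j) (G n j).

Lemma tree_point_dyadic_fold m n j : (n + m = k)%nat -> (j < 2 ^ n)%nat ->
  tree_point n j = dyadic_fold pmid m (fun i => tree_point k (j * 2 ^ m + i)%nat).
Proof.
  revert n j; induction m as [|m IH]; intros n j Hnm Hj.
  - simpl. replace n with k by lia. now rewrite Nat.mul_1_r, Nat.add_0_r.
  - destruct (tree_mid n j ltac:(lia) Hj) as [Ef [EF [Eg EG]]].
    transitivity (pmid (tree_point (S n) (2 * j)) (tree_point (S n) (2 * j + 1))).
    { unfold pmid, tree_point; simpl. now rewrite Ef, EF, Eg, EG. }
    rewrite (IH (S n) (2 * j)%nat), (IH (S n) (2 * j + 1)%nat) by (simpl; lia).
    simpl; f_equal; apply dyadic_fold_ext; intros i Hi; f_equal; nia.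
Qed.

Lemma root_dyadic_fold : tree_point 0 0 = dyadic_fold pmid k (tree_point k).
Proof. rewrite (tree_point_dyadic_fold k 0 0) by (simpl; lia). now apply dyadic_fold_ext. Qed.

Lemma leaf_linear L : (L < 2 ^ k)%nat ->
  (forall x y, g k L (vadd x y) = g k L x + g k L y) /\
  (forall s x, g k L (vscal s x) = s * g k L x).
Proof. intros HL. destruct (tree_inD k L (le_n k) HL) as [_ [[Hadd [Hscal _]] _]]. auto. Qed.

Lemma root_linear :
  (forall x y, g 0 0 (vadd x y) = g 0 0 x + g 0 0 y) /\
  (forall s x, g 0 0 (vscal s x) = s * g 0 0 x).
Proof.
  destruct (tree_inD 0 0 (Nat.le_0_l k) ltac:(simpl; lia)) as [_ [[Hadd [Hscal _]] _]]. auto.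
Qed.

Definition cpair (K L : nat) : R :=
  g k L (f k K) - g k L (f 0 0) - g 0 0 (f k K) + g 0 0 (f 0 0).

Lemma avg_leaf_g x : avg k (fun L => g k L x) = g 0 0 x.
Proof.
  change (g 0 0 x) with (pt_g (tree_point 0 0) x).
  now rewrite root_dyadic_fold, pt_g_dyadic_fold.
Qed.

Lemma avg_leaf_f (h : X -> R) :
  (forall x y, h (vadd x y) = h x + h y) -> (forall s x, h (vscal s x) = s * h x) ->
  avg k (fun K => h (f k K)) = h (f 0 0).
Proof.
  intros Hadd Hscal. change (f 0 0) with (pt_f (tree_point 0 0)).
  now rewrite root_dyadic_fold, (linear_pt_f_dyadic_fold X h k _ Hadd Hscal).
Qed.

Lemma avg_cpair_row K : (K < 2 ^ k)%nat -> avg k (fun L => cpair K L) = 0.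
Proof.
  intros HK.
  rewrite (avg_ext k _ (fun L => (g k L (f k K) - g k L (f 0 0)) + (g 0 0 (f 0 0) - g 0 0 (f k K))))
    by (intros; unfold cpair; ring).
  rewrite avg_add, avg_sub, avg_const, !avg_leaf_g. ring.
Qed.

Lemma avg_cpair_col L : (L < 2 ^ k)%nat -> avg k (fun K => cpair K L) = 0.
Proof.
  intros HL. destruct (leaf_linear L HL) as [HaddL HscalL].
  destruct root_linear as [Hadd0 Hscal0].
  rewrite (avg_ext k _ (fun K => (g k L (f k K) - g 0 0 (f k K)) + (g 0 0 (f 0 0) - g k L (f 0 0))))
    by (intros; unfold cpair; ring).
  rewrite avg_add, avg_sub, avg_const, (avg_leaf_f _ HaddL HscalL), (avg_leaf_f _ Hadd0 Hscal0).
  ring.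
Qed.

Lemma pairing_gap_leaves K L : (K < 2 ^ k)%nat -> (L < 2 ^ k)%nat ->
  pairing_gap (tree_point k K) (tree_point k L)
  = Rabs (cpair K K + cpair L L - cpair K L - cpair L K).
Proof.
  intros HK HL. destruct (leaf_linear K HK) as [HaddK _]. destruct (leaf_linear L HL) as [HaddL _].
  unfold pairing_gap, tree_point, cpair; simpl.
  rewrite (additive_sub X _ HaddK), (additive_sub X _ HaddL).
  f_equal; ring.
Qed.

Definition lambda_coef (K L : nat) : R :=
  (fun x => (g k L x - g 0 0 x) / 2 ^ k) (vscal (/ 2 ^ k) (vsub (f k K) (f 0 0)))
  + (fun x => (g k K x - g 0 0 x) / 2 ^ k) (vscal (/ 2 ^ k) (vsub (f k L) (f 0 0))).

Lemma lambda_coef_cpair K L : (K < 2 ^ k)%nat -> (L < 2 ^ k)%nat ->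
  lambda_coef K L = / (2 ^ k * 2 ^ k) * (cpair K L + cpair L K).
Proof.
  intros HK HL. destruct (leaf_linear K HK) as [HaddK HscalK].
  destruct (leaf_linear L HL) as [HaddL HscalL]. destruct root_linear as [Hadd0 Hscal0].
  assert (0 < 2 ^ k) by (apply pow_lt; lra).
  unfold lambda_coef, cpair. rewrite HscalK, HscalL, !Hscal0, (additive_sub X _ HaddK),
    (additive_sub X _ HaddL), !(additive_sub X _ Hadd0).
  field. lra.
Qed.

Lemma rsum_lambda_coef :
  rsum (2 ^ k) (fun K => rsum (2 ^ k) (fun L => Rabs (lambda_coef K L)))
  = avg k (fun K => avg k (fun L => Rabs (cpair K L + cpair L K))).
Proof.
  assert (H2k : 0 < 2 ^ k) by (apply pow_lt; lra).
  set (c := / (2 ^ k * 2 ^ k)).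
  assert (Hc : 0 < c) by (apply Rinv_0_lt_compat; nra).
  rewrite rsum_avg,
    (avg_ext k _ (fun K => 2 ^ k * (c * avg k (fun L => Rabs (cpair K L + cpair L K))))).
  - rewrite !avg_scal. unfold c. field. lra.
  - intros K HK. rewrite rsum_avg, <- (avg_scal k c). f_equal.
    apply avg_ext; intros L HL.
    rewrite lambda_coef_cpair by auto. fold c.
    now rewrite Rabs_mult, (Rabs_pos_eq c) by lra.
Qed.

Lemma rsum_lambda_coef_le :
  rsum (2 ^ k) (fun K => rsum (2 ^ k) (fun L => Rabs (lambda_coef K L)))
  <= 4 * (B (f 0 0) (F 0 0) (g 0 0) (G 0 0)
          - / 2 ^ k * rsum (2 ^ k) (fun j => B (f k j) (F k j) (g k j) (G k j))).
Proof.
  assert (Hleaves : forall i, (i < 2 ^ k)%nat -> inD_point (tree_point k i))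
    by (intros; now apply tree_inD).
  assert (Hdefect : B (f 0 0) (F 0 0) (g 0 0) (G 0 0)
                    - / 2 ^ k * rsum (2 ^ k) (fun j => B (f k j) (F k j) (g k j) (G k j))
                    = concavity_defect pmid B_point k (tree_point k)).
  { unfold concavity_defect. rewrite <- root_dyadic_fold, rsum_avg.
    unfold B_point, tree_point; simpl. field. apply pow_nonzero; lra. }
  rewrite rsum_lambda_coef, Hdefect.
  eapply Rle_trans; [apply avg2_sym_le; [apply avg_cpair_row | apply avg_cpair_col]|].
  apply Rmult_le_compat_l; [lra|].
  eapply Rle_trans; [|apply (avg2_omega_le pmid inD_point B_point pairing_gap)]; auto.
  - apply Req_le, avg_ext; intros K HK; apply avg_ext; intros L HL.
    symmetry; now apply pairing_gap_leaves.
  - apply pmid_medial.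
  - apply pmid_comm.
  - apply pmid_idem.
  - apply inD_point_pmid.
  - intros; apply Rabs_pos.
  - apply B_point_pmid.
Qed.

End BellmanTree.

Theorem mainTheorem6 :
  exists c : R, 0 < c /\
  forall (X : BanachSpace) (p p' beta : R),
    1 < p -> 1 / p + 1 / p' = 1 ->
    umd_constant X p beta ->
    forall B : X -> R -> (X -> R) -> R -> R,
    (forall f F g G, inD X p p' f F g G ->
        0 <= B f F g G /\ B f F g G <= 4 * beta * rpow F (1 / p) * rpow G (1 / p')) ->
    (forall f F g G fp Fp gp Gp fm Fm gm Gm,
        inD X p p' f F g G -> inD X p p' fp Fp gp Gp -> inD X p p' fm Fm gm Gm ->
        f = vscal (1/2) (vadd fp fm) -> F = (Fp + Fm) / 2 ->
        g = (fun x => (gp x + gm x) / 2) -> G = (Gp + Gm) / 2 ->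
        B f F g G >= (B fp Fp gp Gp + B fm Fm gm Gm) / 2
                     + Rabs ((fun x => gp x - gm x) (vsub fp fm))) ->
    forall (k : nat) (f : nat -> nat -> X) (F : nat -> nat -> R)
           (g : nat -> nat -> X -> R) (G : nat -> nat -> R),
    (1 <= k)%nat ->
    (forall n j, (n <= k)%nat -> (j < 2 ^ n)%nat -> inD X p p' (f n j) (F n j) (g n j) (G n j)) ->
    (forall n j, (n < k)%nat -> (j < 2 ^ n)%nat ->
        f n j = vscal (1/2) (vadd (f (S n) (2 * j)%nat) (f (S n) (2 * j + 1)%nat)) /\
        F n j = (F (S n) (2 * j)%nat + F (S n) (2 * j + 1)%nat) / 2 /\
        g n j = (fun x => (g (S n) (2 * j)%nat x + g (S n) (2 * j + 1)%nat x) / 2) /\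
        G n j = (G (S n) (2 * j)%nat + G (S n) (2 * j + 1)%nat) / 2) ->
    let lam := fun K L : nat =>
      (fun x => (g k L x - g O O x) / 2 ^ k) (vscal (/ 2 ^ k) (vsub (f k K) (f O O)))
      + (fun x => (g k K x - g O O x) / 2 ^ k) (vscal (/ 2 ^ k) (vsub (f k L) (f O O))) in
    rsum (2 ^ k) (fun K => rsum (2 ^ k) (fun L => Rabs (lam K L)))
      <= c * Rpower 2 (INR k / 2) *
         (B (f O O) (F O O) (g O O) (G O O)
          - / 2 ^ k * rsum (2 ^ k) (fun j => B (f k j) (F k j) (g k j) (G k j))).
Proof.
  exists 4. split; [lra|].
  intros X p p' beta Hp Hpp' _ B _ B_mid k f F g G _ tree_inD tree_mid lam.
  pose proof (rsum_lambda_coef_le X p p' ltac:(lra) (conjugate_exponent_ge1 p p' Hp Hpp')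
                B B_mid k f F g G tree_inD tree_mid) as Hle.
  set (D := B (f O O) (F O O) (g O O) (G O O) - _) in *.
  assert (HD : 0 <= D).
  { enough (0 <= rsum (2 ^ k) (fun K => rsum (2 ^ k) (fun L => Rabs (lambda_coef X k f g K L))))
      by lra.
    apply rsum_ge0; intros; apply rsum_ge0; intros; apply Rabs_pos. }
  assert (H2k : 1 <= Rpower 2 (INR k / 2)).
  { rewrite <- (Rpower_O 2) at 1 by lra.
    apply Rle_Rpower; [lra|]. pose proof (pos_INR k). lra. }
  change (rsum (2 ^ k) (fun K => rsum (2 ^ k) (fun L => Rabs (lambda_coef X k f g K L)))
          <= 4 * Rpower 2 (INR k / 2) * D).
  nra.
Qed.
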